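(* Let $\theta>1$ be real and $n$ a positive integer. Then $n\in\mathcal A_\theta$ if and only if both \[\left\{\frac{2n}{\log\theta}\right\}\geq 1-2f\!\left(\frac{\log\theta}{n}\right)\quad\text{and}\quad \left\{\frac{n}{\log\theta}\right\}<1-f\!\left(\frac{\log\theta}{n}\right).\]
   Context: $\lfloor x\rfloor$ is the floor and $\{x\}=x-\lfloor x\rfloor$ the fractional part; $\log$ is the natural logarithm. $M'_\theta(n)=\left\lfloor 1/(\theta^{1/n}-1)\right\rfloor$ and $\mathcal A_\theta=\{n\in\mathbb N: M'_\theta(n)\neq \lfloor n/\log\theta-1/2\rfloor\}$. For $t>0$, $f(t)=\frac{1}{e^t-1}-\frac1t+\frac12$. *)

From Stdlib Require Import Reals Lra Lia ZArith.
Open Scope R_scope.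

(* floor x : the greatest integer <= x.  (Stdlib's [up x] is the least integer > x.) *)
Definition floor (x : R) : Z := (up x - 1)%Z.

Definition frac (x : R) : R := x - IZR (floor x).

Definition Mprime (theta : R) (n : nat) : Z :=
  floor (1 / (Rpower theta (1 / INR n) - 1)).

Definition inA (theta : R) (n : nat) : Prop :=
  Mprime theta n <> floor (INR n / ln theta - 1 / 2).

Definition fbar (t : R) : R := 1 / (exp t - 1) - 1 / t + 1 / 2.

(* Writing t = log(theta)/n, we have 1/(theta^(1/n) - 1) = 1/(e^t - 1) = n/log(theta) - 1/2 + f(t)
   exactly, so n lies in A_theta precisely when adding f(t) to x - 1/2, with x = n/log(theta),
   crosses an integer.  Since 0 < f(t) < 1/2 (the lower bound is e^t (2 - t) < 2 + t), this
   happens iff {x} lies in [1/2 - f(t), 1 - f(t)), which is the stated pair of conditions on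
   {x} and {2x}. *)

From Stdlib Require Import Reals Lra Lia ZArith.
Open Scope R_scope.

Lemma floor_eq (k : Z) (x : R) : IZR k <= x < IZR k + 1 -> floor x = k.
Proof.
  intros [Hkx Hxk]. unfold floor.
  assert (Hup : up x = (k + 1)%Z).
  { symmetry. apply tech_up; rewrite plus_IZR; lra. }
  rewrite Hup. lia.
Qed.

Lemma floor_bounds (x : R) : IZR (floor x) <= x < IZR (floor x) + 1.
Proof.
  unfold floor. rewrite minus_IZR. destruct (archimed x). simpl. lra.
Qed.

Lemma floor_add_neq_iff (x f : R) : 0 < f < 1 / 2 ->
  floor (x - 1 / 2 + f) <> floor (x - 1 / 2) <->
  frac (2 * x) >= 1 - 2 * f /\ frac x < 1 - f.
Proof.
  intros Hf. unfold frac.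
  pose proof (floor_bounds x) as Hx. set (k := floor x) in *.
  destruct (Rlt_or_le (x - IZR k) (1 / 2)) as [Hlow | Hhigh].
  - assert (E2 : floor (2 * x) = (2 * k)%Z) by (apply floor_eq; rewrite mult_IZR; lra).
    assert (E1 : floor (x - 1 / 2) = (k - 1)%Z) by (apply floor_eq; rewrite minus_IZR; lra).
    rewrite E2, E1, mult_IZR.
    destruct (Rlt_or_le (x - IZR k) (1 / 2 - f)) as [Hq | Hq].
    + assert (E3 : floor (x - 1 / 2 + f) = (k - 1)%Z) by (apply floor_eq; rewrite minus_IZR; lra).
      rewrite E3. split; [intro H; contradiction H; reflexivity | intros [H _]; lra].
    + assert (E3 : floor (x - 1 / 2 + f) = k) by (apply floor_eq; lra).
      rewrite E3. split; [intros _; split; lra | intros _; lia].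
  - assert (E2 : floor (2 * x) = (2 * k + 1)%Z)
      by (apply floor_eq; rewrite plus_IZR, mult_IZR; lra).
    assert (E1 : floor (x - 1 / 2) = k) by (apply floor_eq; lra).
    assert (E3 : floor (x - 1 / 2 + f) = k) by (apply floor_eq; lra).
    rewrite E2, E1, E3, plus_IZR, mult_IZR.
    split; [intro H; contradiction H; reflexivity | intros [H1 H2]; lra].
Qed.

Lemma derivable_pt_lim_exp_gap (c : R) :
  derivable_pt_lim (fun s => (2 + s) * exp (- s) - (2 - s)) c (1 - (1 + c) * exp (- c)).
Proof.
  assert (Dexp : derivable_pt_lim (fun s => exp (- s)) c (exp (- c) * (-1))).
  { apply (derivable_pt_lim_comp (fun s => - s) exp c (-1) (exp (- c))).
    - replace (-1) with (- (1)) by ring. apply derivable_pt_lim_opp, derivable_pt_lim_id.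
    - apply derivable_pt_lim_exp. }
  assert (Dplus : derivable_pt_lim (fun s => 2 + s) c (0 + 1)).
  { apply derivable_pt_lim_plus; [apply derivable_pt_lim_const | apply derivable_pt_lim_id]. }
  assert (Dminus : derivable_pt_lim (fun s => 2 - s) c (0 - 1)).
  { apply derivable_pt_lim_minus; [apply derivable_pt_lim_const | apply derivable_pt_lim_id]. }
  pose proof (derivable_pt_lim_minus _ _ c _ _
                (derivable_pt_lim_mult _ _ c _ _ Dplus Dexp) Dminus) as D.
  replace (1 - (1 + c) * exp (- c))
    with ((0 + 1) * exp (- c) + (2 + c) * (exp (- c) * (-1)) - (0 - 1)) by ring.
  exact D.
Qed.

(* The gap (2 + s) e^(-s) - (2 - s) vanishes at 0 and has derivative 1 - (1 + s) e^(-s) > 0. *)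
Lemma exp_mul_2_sub_lt (t : R) : 0 < t -> exp t * (2 - t) < 2 + t.
Proof.
  intro Ht.
  destruct (MVT_cor2 _ _ 0 t Ht (fun c _ => derivable_pt_lim_exp_gap c))
    as [c [Hmvt [Hc0 Hct]]].
  assert (Hslope : 0 < 1 - (1 + c) * exp (- c)).
  { assert (Hc : 1 + c < exp c) by (apply exp_ineq1; lra).
    rewrite exp_Ropp.
    apply Rlt_Rminus, (Rmult_lt_reg_r (exp c)); [apply exp_pos|].
    rewrite Rmult_assoc, Rinv_l by (apply Rgt_not_eq, exp_pos). lra. }
  assert (Hgap : 2 - t < (2 + t) * exp (- t)).
  { rewrite Ropp_0, exp_0 in Hmvt.
    assert (0 < (1 - (1 + c) * exp (- c)) * (t - 0)) by (apply Rmult_lt_0_compat; lra).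
    lra. }
  assert (Hinv : exp t * exp (- t) = 1) by (rewrite <- exp_plus, Rplus_opp_r; apply exp_0).
  apply (Rmult_lt_compat_l (exp t)) in Hgap; [|apply exp_pos].
  replace (exp t * ((2 + t) * exp (- t))) with ((2 + t) * (exp t * exp (- t))) in Hgap by ring.
  rewrite Hinv in Hgap. lra.
Qed.

Lemma fbar_pos (t : R) : 0 < t -> 0 < fbar t.
Proof.
  intro Ht. unfold fbar.
  assert (He : 1 + t < exp t) by (apply exp_ineq1; lra).
  pose proof (exp_mul_2_sub_lt t Ht).
  replace (1 / (exp t - 1) - 1 / t + 1 / 2)
    with ((t + 2 - exp t * (2 - t)) / (2 * t * (exp t - 1))) by (field; lra).
  apply Rdiv_lt_0_compat; [lra|]. apply Rmult_lt_0_compat; lra.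
Qed.

Lemma fbar_lt_half (t : R) : 0 < t -> fbar t < 1 / 2.
Proof.
  intro Ht. unfold fbar.
  assert (He : 1 + t < exp t) by (apply exp_ineq1; lra).
  assert (1 / (exp t - 1) < 1 / t).
  { unfold Rdiv. rewrite !Rmult_1_l. apply Rinv_lt_contravar; [apply Rmult_lt_0_compat|]; lra. }
  lra.
Qed.

Lemma Mprime_arg_eq (theta : R) (n : nat) : 1 < theta -> (0 < n)%nat ->
  1 / (Rpower theta (1 / INR n) - 1) = INR n / ln theta - 1 / 2 + fbar (ln theta / INR n).
Proof.
  intros Htheta Hn.
  assert (Hl : 0 < ln theta) by (rewrite <- ln_1; apply ln_increasing; lra).
  assert (HN : 0 < INR n) by (apply lt_0_INR, Hn).
  unfold fbar, Rpower.
  replace (1 / INR n * ln theta) with (ln theta / INR n) by (field; lra).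
  replace (1 / (ln theta / INR n)) with (INR n / ln theta) by (field; lra).
  ring.
Qed.

Theorem mainTheorem11 (theta : R) (n : nat) (Htheta : 1 < theta) (Hn : (0 < n)%nat) :
  inA theta n <->
  (frac (2 * INR n / ln theta) >= 1 - 2 * fbar (ln theta / INR n) /\
   frac (INR n / ln theta) < 1 - fbar (ln theta / INR n)).
Proof.
  assert (Hl : 0 < ln theta) by (rewrite <- ln_1; apply ln_increasing; lra).
  assert (HN : 0 < INR n) by (apply lt_0_INR, Hn).
  assert (Ht : 0 < ln theta / INR n) by (apply Rdiv_lt_0_compat; assumption).
  replace (2 * INR n / ln theta) with (2 * (INR n / ln theta)) by (field; lra).
  rewrite <- floor_add_neq_iff by (split; [apply fbar_pos | apply fbar_lt_half]; exact Ht).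
  unfold inA, Mprime. rewrite Mprime_arg_eq by assumption.
  reflexivity.
Qed.
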